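(* Let $H$ be a finitely generated group, let $\phi\in\operatorname{Aut}(H)$ and let $K$ be a proper subgroup of $H$ such that the normalizer $N_H(K)$ has finite index in $H$. Let $G=H\ast_{(K,\phi)}=\langle H, t;\ tkt^{-1}=\phi(k),\ k\in K\rangle$. Then $G$ is residually finite if and only if both $H$ and $N_H(K)/K$ are residually finite.
   Context: For a group $H$, $\phi\in\operatorname{Aut}(H)$ and a proper subgroup $K\lneq H$, the automorphism-induced HNN-extension $H\ast_{(K,\phi)}$ is the group given by the relative presentation $\langle H, t;\ tkt^{-1}=\phi(k),\ k\in K\rangle$. $N_H(K)$ denotes the normalizer of $K$ in $H$. *)

From Stdlib Require Import List.
Set Implicit Arguments.
Unset Strict Implicit.

Record group := Group {
  carrier :> Type;
  mul : carrier -> carrier -> carrier;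
  one : carrier;
  inv : carrier -> carrier;
  mulA : forall x y z, mul x (mul y z) = mul (mul x y) z;
  mul1g : forall x, mul one x = x;
  mulg1 : forall x, mul x one = x;
  mulVg : forall x, mul (inv x) x = one;
  mulgV : forall x, mul x (inv x) = one
}.
Arguments mul {g}.
Arguments one {g}.
Arguments inv {g}.

Definition conjg (G : group) (h k : G) : G := mul (mul h k) (inv h).

Definition is_subgroup (G : group) (P : G -> Prop) : Prop :=
  P one /\ (forall x y, P x -> P y -> P (mul x y)) /\ (forall x, P x -> P (inv x)).

Definition is_normal (G : group) (P : G -> Prop) : Prop :=
  is_subgroup P /\ (forall g x, P x -> P (conjg g x)).

Definition finite_index (G : group) (P : G -> Prop) : Prop :=
  exists s : list G, forall x : G,
    exists r, In r s /\ exists m, P m /\ x = mul r m.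

Definition finitely_generated (G : group) : Prop :=
  exists s : list G, forall P : G -> Prop, is_subgroup P ->
    (forall x, In x s -> P x) -> forall x, P x.

Definition residually_finite (G : group) : Prop :=
  forall g : G, g <> one ->
    exists M : G -> Prop, is_normal M /\ finite_index M /\ ~ M g.

Definition is_hom (G L : group) (f : G -> L) : Prop :=
  forall x y, f (mul x y) = mul (f x) (f y).

Definition is_automorphism (G : group) (phi : G -> G) : Prop :=
  is_hom phi /\ exists psi : G -> G,
    (forall x, psi (phi x) = x) /\ (forall x, phi (psi x) = x).

Definition normalizer (G : group) (K : G -> Prop) : G -> Prop :=
  fun h => forall k, K k <-> K (conjg h k).

(* Q (with map pi, only relevant on N) is a quotient group N / K:
   pi restricted to N is a surjective homomorphism onto Q with kernel K. *)
Definition is_quotient_by (G : group) (N K : G -> Prop) (Q : group)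
    (pi : G -> Q) : Prop :=
  (forall x y, N x -> N y -> pi (mul x y) = mul (pi x) (pi y)) /\
  (forall q : Q, exists x, N x /\ pi x = q) /\
  (forall x, N x -> (pi x = one <-> K x)).

(* "N/K is residually finite": every quotient group N/K is residually finite
   (the quotient is unique up to isomorphism). *)
Definition quotient_residually_finite (G : group) (N K : G -> Prop) : Prop :=
  forall (Q : group) (pi : G -> Q), is_quotient_by N K pi -> residually_finite Q.

(* (G, iota, t) is the HNN extension < H, t ; t k t^-1 = phi k, k in K >,
   characterised by the universal property of the relative presentation. *)
Definition is_HNN (H : group) (K : H -> Prop) (phi : H -> H)
    (G : group) (iota : H -> G) (t : G) : Prop :=
  is_hom iota /\
  (forall k, K k -> conjg t (iota k) = iota (phi k)) /\
  (forall (L : group) (f : H -> L) (s : L),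
     is_hom f -> (forall k, K k -> conjg s (f k) = f (phi k)) ->
     exists F : G -> L,
       (is_hom F /\ (forall h, F (iota h) = f h) /\ F t = s) /\
       (forall F' : G -> L, is_hom F' -> (forall h, F' (iota h) = f h) ->
          F' t = s -> forall x, F' x = F x)).

(* Forward direction: H embeds in G, and for n in N_H(K) outside K the element
   t n t^-1 phi(n)^-1 is nontrivial (permutation representations of G show
   both); a finite-index normal subgroup of G avoiding it yields a finite-index
   normal subgroup of N_H(K)/K avoiding nK.

   Backward direction: write g <> 1 as h0 t^e1 h1 ... t^en hn without pinches.
   Since N_H(K) has finite index and N_H(K)/K is residually finite, K is
   separated from each element outside it by a finite-index subgroup; since H
   is finitely generated, this yields a phi-invariant finite-index normal
   subgroup L such that the h_i and phi^-1(h_i) lying outside K also lie outside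
   KL (and h0 is outside L if n = 0).  Then G acts on the finite set
   H/L x {0, ..., n}: H by left multiplication and t by
   (x, a) |-> (phi x, sigma(KLx) a), where the permutation sigma(KLx) moves the
   level across each letter t^ei whose point of application lies in KLx.
   Reducedness makes these prescriptions consistent, and g moves (L, n) to
   level 0, so g is outside the kernel of the action. *)

From mathcomp Require Import ssreflect ssrfun ssrbool eqtype ssrnat seq fintype finfun zify.
From Stdlib Require List.
From Stdlib Require Import Lia.
From Stdlib Require Import ClassicalEpsilon FunctionalExtensionality.
From Stdlib Require Import PropExtensionality ProofIrrelevance.
Set Implicit Arguments.
Unset Strict Implicit.
Unset Printing Implicit Defensive.

(** * Elementary group theory *)

Section GroupTheory.
Variable G : group.
Implicit Types a x y z : G.

Lemma mulKg x y : mul (inv x) (mul x y) = y.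
Proof. by rewrite mulA mulVg mul1g. Qed.

Lemma mulKVg x y : mul x (mul (inv x) y) = y.
Proof. by rewrite mulA mulgV mul1g. Qed.

Lemma mulgK x y : mul (mul y x) (inv x) = y.
Proof. by rewrite -mulA mulgV mulg1. Qed.

Lemma mulgKV x y : mul (mul y (inv x)) x = y.
Proof. by rewrite -mulA mulVg mulg1. Qed.

Lemma mulgI x : injective (mul x).
Proof. by move=> y z E; rewrite -(mulKg x y) E mulKg. Qed.

Lemma inv_uniq x y : mul x y = one -> inv x = y.
Proof. by move=> E; apply: (@mulgI x); rewrite mulgV E. Qed.

Lemma invK x : inv (inv x) = x.
Proof. exact/inv_uniq/mulVg. Qed.

Lemma invM x y : inv (mul x y) = mul (inv y) (inv x).
Proof. by apply: inv_uniq; rewrite -mulA mulKVg mulgV. Qed.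

Lemma inv1 : inv (one : G) = one.
Proof. exact/inv_uniq/mul1g. Qed.

Lemma conjMg a x y : conjg a (mul x y) = mul (conjg a x) (conjg a y).
Proof. by rewrite /conjg !mulA mulgKV. Qed.

Lemma conjgM a b x : conjg (mul a b) x = conjg a (conjg b x).
Proof. by rewrite /conjg invM !mulA. Qed.

Lemma conjg1 x : conjg one x = x.
Proof. by rewrite /conjg inv1 mulg1 mul1g. Qed.

End GroupTheory.

Section Homomorphisms.
Variables (G L : group) (f : G -> L).
Hypothesis f_hom : is_hom f.

Lemma hom1 : f one = one.
Proof. by apply: (@mulgI _ (f one)); rewrite -f_hom !mulg1. Qed.

Lemma homV x : f (inv x) = inv (f x).
Proof. by symmetry; apply: inv_uniq; rewrite -f_hom mulgV hom1. Qed.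

Lemma homJ x y : f (conjg x y) = conjg (f x) (f y).
Proof. by rewrite /conjg !f_hom homV. Qed.

Lemma hom_comp (M : group) (g : L -> M) : is_hom g -> is_hom (g \o f).
Proof. by move=> g_hom x y /=; rewrite f_hom g_hom. Qed.

Lemma can_hom (g : L -> G) : cancel f g -> cancel g f -> is_hom g.
Proof. by move=> fK gK x y; rewrite -{1}(gK x) -{1}(gK y) -f_hom fK. Qed.

End Homomorphisms.

Lemma hom_iter (G : group) (f : G -> G) n : is_hom f -> is_hom (iter n f).
Proof. by move=> f_hom; elim: n => [|n IHn] x y //=; rewrite IHn f_hom. Qed.

Lemma conjg_hom (G : group) (a : G) : is_hom (conjg a).
Proof. exact: conjMg. Qed.

Section SubgroupTheory.
Variables (G : group) (P : G -> Prop).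
Hypothesis sP : is_subgroup P.

Lemma subgroup1 : P one. Proof. by case: sP. Qed.

Lemma subgroupM x y : P x -> P y -> P (mul x y). Proof. by case: sP => _ []; auto. Qed.

Lemma subgroupV x : P x -> P (inv x). Proof. by case: sP => _ []; auto. Qed.

Lemma subgroup_lcoset x y z :
  P (mul (inv z) x) -> P (mul (inv z) y) -> P (mul (inv x) y).
Proof.
move=> Px Py; have := subgroupM (subgroupV Px) Py.
by rewrite invM invK -mulA mulKVg.
Qed.

Lemma subgroup_lcoset_sym x y : P (mul (inv x) y) -> P (mul (inv y) x).
Proof. by move/subgroupV; rewrite invM invK. Qed.

End SubgroupTheory.

Lemma normalJ (G : group) (P : G -> Prop) : is_normal P -> forall g x, P x -> P (conjg g x).
Proof. by case. Qed.

Section Subgroups.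
Variable G : group.
Implicit Types (P Q : G -> Prop) (x y z : G).

Lemma subgroup_preim (L : group) (f : G -> L) (M : L -> Prop) :
  is_hom f -> is_subgroup M -> is_subgroup (fun x => M (f x)).
Proof.
move=> f_hom sM; split; first by rewrite (hom1 f_hom); exact: (subgroup1 sM).
split=> [x y Mx My | x Mx] /=; first by rewrite f_hom; exact: (subgroupM sM Mx My).
by rewrite (homV f_hom); exact: (subgroupV sM Mx).
Qed.

Lemma normal_preim (L : group) (f : G -> L) (M : L -> Prop) :
  is_hom f -> is_normal M -> is_normal (fun x => M (f x)).
Proof.
move=> f_hom nM; split; first exact: subgroup_preim f_hom nM.1.
by move=> g x Mx; rewrite (homJ f_hom); exact: normalJ.
Qed.

Lemma subgroup_inter P Q :
  is_subgroup P -> is_subgroup Q -> is_subgroup (fun x => P x /\ Q x).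
Proof.
move=> sP sQ; split; first by split; [exact: (subgroup1 sP) | exact: (subgroup1 sQ)].
split=> [x y [Px Qx] [Py Qy] | x [Px Qx]]; split;
  by [exact: (subgroupM sP Px Py) | exact: (subgroupM sQ Qx Qy)
     | exact: (subgroupV sP Px) | exact: (subgroupV sQ Qx)].
Qed.

Lemma normal_inter P Q :
  is_normal P -> is_normal Q -> is_normal (fun x => P x /\ Q x).
Proof.
move=> nP nQ; split; first exact: subgroup_inter nP.1 nQ.1.
by move=> g x [Px Qx]; split; exact: normalJ.
Qed.

Lemma normalizer_subgroup (K : G -> Prop) : is_subgroup (normalizer K).
Proof.
split; first by move=> k; rewrite conjg1.
split=> [x y Nx Ny k | x Nx k]; first by rewrite conjgM -Nx -Ny.
by rewrite (Nx (conjg (inv x) k)) -conjgM mulgV conjg1.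
Qed.

Lemma normalizer_self (K : G -> Prop) k : is_subgroup K -> K k -> normalizer K k.
Proof.
move=> sK Kk k'; rewrite /conjg; split=> [Kk' | Kkk'].
  exact: (subgroupM sK (subgroupM sK Kk Kk') (subgroupV sK Kk)).
have := subgroupM sK (subgroupM sK (subgroupV sK Kk) Kkk') Kk.
by rewrite !mulA mulVg mul1g mulgKV.
Qed.

Lemma subgroup_eq_mod (L : group) (f g : G -> L) (M : L -> Prop) :
  is_hom f -> is_hom g -> is_normal M -> is_subgroup (fun x => M (mul (inv (f x)) (g x))).
Proof.
move=> f_hom g_hom nM; have sM := nM.1; split.
  by rewrite (hom1 f_hom) (hom1 g_hom) mulVg; exact: (subgroup1 sM).
split=> [x y Mx My | x Mx].
  have -> : mul (inv (f (mul x y))) (g (mul x y))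
          = mul (mul (inv (f y)) (g y)) (conjg (inv (g y)) (mul (inv (f x)) (g x))).
    by rewrite f_hom g_hom /conjg invM invK !mulA mulgK.
  exact: (subgroupM sM My (normalJ nM _ Mx)).
have -> : mul (inv (f (inv x))) (g (inv x)) = conjg (f x) (inv (mul (inv (f x)) (g x))).
  by rewrite (homV f_hom) (homV g_hom) /conjg invM !invK !mulA mulgK.
exact: (normalJ nM _ (subgroupV sM Mx)).
Qed.

End Subgroups.

(** * Subgroups of finite index *)

Lemma In_enum (T : finType) (x : T) : List.In x (enum T).
Proof.
have : x \in enum T by rewrite mem_enum.
elim: (enum T) => //= y s IHs; rewrite in_cons => /orP [/eqP -> | /IHs]; auto.
Qed.

Lemma In_nth_seq (T : Type) (x0 : T) (s : seq T) d : d < size s -> List.In (nth x0 s d) s.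
Proof. by elim: s d => [|x s IHs] [|d] //= lt_d; [left | right; exact: IHs]. Qed.

Section FiniteIndex.
Variable G : group.
Implicit Types (P Q : G -> Prop) (x y : G).

Lemma finite_indexT : finite_index (fun _ : G => True).
Proof. by exists [:: one] => x; exists one; split; [left | exists x; rewrite mul1g]. Qed.

Lemma finite_index_transversal P : finite_index P ->
  exists n (r : 'I_n -> G) (c : G -> 'I_n), forall x, P (mul (inv (r (c x))) x).
Proof.
case=> s hs; exists (length s).+1, (fun i => List.nth i s one).
suff /choice [c hc] : forall x, exists i : 'I_(length s).+1,
  P (mul (inv (List.nth i s one)) x) by exists c.
move=> x.
have [r [/(List.In_nth _ _ one) [i [lt_i <-]] [m [Pm ->]]]] := hs x.
have lt_i' : i < (length s).+1 by lia.
by exists (Ordinal lt_i'); rewrite /= mulKg.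
Qed.

Lemma transversal_fibres P (T : Type) (r : T -> G) (c : G -> T) :
  is_subgroup P -> (forall x, P (mul (inv (r (c x))) x)) ->
  forall x y, c x = c y -> P (mul (inv x) y).
Proof. by move=> sP hr x y cxy; apply: (subgroup_lcoset sP (hr x)); rewrite cxy. Qed.

Lemma finite_index_classifier P : is_subgroup P -> finite_index P ->
  exists n (c : G -> 'I_n), forall x y, c x = c y -> P (mul (inv x) y).
Proof.
move=> sP /finite_index_transversal [n [r [c hr]]].
by exists n, c; exact: transversal_fibres hr.
Qed.

Lemma finite_index_fibres P (T : finType) (c : G -> T) :
  (forall x y, c x = c y -> P (mul (inv x) y)) -> finite_index P.
Proof.
move=> hc; pose r i := epsilon (inhabits one) (fun x => c x = i).
exists (List.map r (enum T)) => x; exists (r (c x)).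
split; first exact/List.in_map/In_enum.
exists (mul (inv (r (c x))) x); split; last by rewrite mulKVg.
exact/hc/(epsilon_spec (inhabits one) (fun y => c y = c x))/(ex_intro _ x erefl).
Qed.

Lemma finite_index_inter P Q : is_subgroup P -> is_subgroup Q ->
  finite_index P -> finite_index Q -> finite_index (fun x => P x /\ Q x).
Proof.
move=> sP sQ /(finite_index_classifier sP) [n [cP hP]].
move=> /(finite_index_classifier sQ) [m [cQ hQ]].
by apply: (finite_index_fibres (c := fun x => (cP x, cQ x))) => x y [/hP ? /hQ ?].
Qed.

Lemma normal_core P : is_subgroup P -> finite_index P ->
  exists M, [/\ is_normal M, finite_index M & forall x, M x -> P x].
Proof.
move=> sP /finite_index_transversal [n [r [c hr]]].
have hc := transversal_fibres sP hr.
exists (fun x => forall g, P (conjg g x)); split.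
- have sM : is_subgroup (fun x => forall g, P (conjg g x)).
    split; first by move=> g; rewrite /conjg mulg1 mulgV; exact: (subgroup1 sP).
    split=> [x y Px Py g | x Px g].
      by rewrite conjMg; exact: (subgroupM sP (Px g) (Py g)).
    by rewrite (homV (conjg_hom g)); exact: (subgroupV sP (Px g)).
  by split=> // a x Px g; rewrite -conjgM.
- apply: (finite_index_fibres (c := fun x => [ffun i => c (mul x (r i))])).
  move=> x y /ffunP E g; set i := c (inv g).
  have Pri : P (conjg (inv (r i)) (mul (inv x) y)).
    by have := E i; rewrite !ffunE => /hc; rewrite /conjg invM invK !mulA.
  have Pm := hr (inv g); rewrite -/i in Pm.
  have -> : g = mul (inv (mul (inv (r i)) (inv g))) (inv (r i)).
    by rewrite invM !invK mulgK.
  rewrite conjgM {1}/conjg invK.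
  exact: (subgroupM sP (subgroupM sP (subgroupV sP Pm) Pri) Pm).
- by move=> x /(_ one); rewrite conjg1.
Qed.

End FiniteIndex.

Lemma finite_index_preim (G L : group) (f : G -> L) (M : L -> Prop) :
  is_hom f -> is_subgroup M -> finite_index M -> finite_index (fun x => M (f x)).
Proof.
move=> f_hom sM /(finite_index_classifier sM) [n [c hc]].
apply: (finite_index_fibres (c := c \o f)) => x y /hc.
by rewrite f_hom (homV f_hom).
Qed.

(** * Symmetric groups, subgroups and quotients *)

Lemma sig_eq (A : Type) (P : A -> Prop) (x y : {a | P a}) : sval x = sval y -> x = y.
Proof. by case: x y => [a Pa] [b Pb] /= E; subst b; rewrite (proof_irrelevance _ Pa Pb). Qed.

Record bij (X : Type) := Bij {
  bij_fun : X -> X;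
  bij_inv : X -> X;
  bij_funK : cancel bij_fun bij_inv;
  bij_invK : cancel bij_inv bij_fun }.

Lemma bij_eq (X : Type) (p q : bij X) : bij_fun p =1 bij_fun q -> p = q.
Proof.
move=> /functional_extensionality.
case: p q => f f' fK f'K [g g' gK g'K] /= E; subst g.
have E' : f' = g' by apply: functional_extensionality => x; rewrite -{1}(g'K x) fK.
by subst g'; f_equal; exact: proof_irrelevance.
Qed.

Section SymmetricGroup.
Variable X : Type.
Implicit Types p q r : bij X.

Definition bij_mul p q : bij X :=
  Bij (can_comp (bij_funK p) (bij_funK q)) (can_comp (bij_invK q) (bij_invK p)).
Definition bij_one : bij X := @Bij X id id (fun _ => erefl) (fun _ => erefl).
Definition bij_inverse p : bij X := Bij (bij_invK p) (bij_funK p).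

Lemma bij_mulA p q r : bij_mul p (bij_mul q r) = bij_mul (bij_mul p q) r.
Proof. exact: bij_eq. Qed.
Lemma bij_mul1 p : bij_mul bij_one p = p.
Proof. exact: bij_eq. Qed.
Lemma bij_mul1r p : bij_mul p bij_one = p.
Proof. exact: bij_eq. Qed.
Lemma bij_mulV p : bij_mul (bij_inverse p) p = bij_one.
Proof. by apply: bij_eq => x /=; rewrite bij_funK. Qed.
Lemma bij_mulVr p : bij_mul p (bij_inverse p) = bij_one.
Proof. by apply: bij_eq => x /=; rewrite bij_invK. Qed.

Definition sym_group : group :=
  Group bij_mulA bij_mul1 bij_mul1r bij_mulV bij_mulVr.

End SymmetricGroup.

Section Swap.
Variable T : eqType.
Implicit Types a b x : T.

Definition swap_fun a b x := if x == a then b else if x == b then a else x.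

Lemma swap_funK a b : involutive (swap_fun a b).
Proof.
move=> x; rewrite /swap_fun.
case: (eqVneq x a) => [-> | xa]; first by rewrite eqxx; case: eqVneq.
case: (eqVneq x b) => [-> | xb]; first by rewrite eqxx.
by rewrite (negbTE xa) (negbTE xb).
Qed.

Definition swap a b : bij T := Bij (swap_funK a b) (swap_funK a b).

Lemma bij_extend (R : T -> T -> Prop) (s : seq T) :
  (forall a b b', R a b -> R a b' -> b = b') ->
  (forall a a' b, R a b -> R a' b -> a = a') ->
  (forall a b, R a b -> a \in s) ->
  exists p : bij T, forall a b, R a b -> bij_fun p a = b.
Proof.
move=> R_fun R_inj R_s.
suff [p hp] : exists p : bij T, forall a b, a \in s -> R a b -> bij_fun p a = b.
  by exists p => a b Rab; apply: hp (R_s _ _ Rab) Rab.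
elim: s {R_s} => [|x s [p hp]]; first by exists (bij_one T).
case: (classic (exists b, R x b)) => [[b Rxb] | no_Rx]; last first.
  exists p => a c; rewrite in_cons => /orP [/eqP -> Rxc | /hp]; last exact.
  by case: no_Rx; exists c.
exists (bij_mul (swap (bij_fun p x) b) p) => a c; rewrite in_cons /=.
case: (eqVneq a x) => [-> _ Rxc | ax /= a_s Rac].
  by rewrite /swap_fun eqxx (R_fun _ _ _ Rxc Rxb).
rewrite (hp _ _ a_s Rac) /swap_fun.
have [E | _] := eqVneq c (bij_fun p x).
  by case/eqP: ax; apply: (can_inj (bij_funK p)); rewrite (hp _ _ a_s Rac) E.
have [E | //] := eqVneq c b.
by case/eqP: ax; apply: R_inj Rac _; rewrite E.
Qed.

End Swap.

Section SubGroup.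
Variables (G : group) (P : G -> Prop).
Hypothesis sP : is_subgroup P.
Implicit Types x y z : {x | P x}.

Definition sub_mul x y : {x | P x} :=
  exist P (mul (sval x) (sval y)) (subgroupM sP (proj2_sig x) (proj2_sig y)).
Definition sub_one : {x | P x} := exist P one (subgroup1 sP).
Definition sub_inv x : {x | P x} := exist P (inv (sval x)) (subgroupV sP (proj2_sig x)).

Lemma sub_mulA x y z : sub_mul x (sub_mul y z) = sub_mul (sub_mul x y) z.
Proof. exact/sig_eq/mulA. Qed.
Lemma sub_mul1 x : sub_mul sub_one x = x.
Proof. exact/sig_eq/mul1g. Qed.
Lemma sub_mul1r x : sub_mul x sub_one = x.
Proof. exact/sig_eq/mulg1. Qed.
Lemma sub_mulV x : sub_mul (sub_inv x) x = sub_one.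
Proof. exact/sig_eq/mulVg. Qed.
Lemma sub_mulVr x : sub_mul x (sub_inv x) = sub_one.
Proof. exact/sig_eq/mulgV. Qed.

Definition sub_group : group := Group sub_mulA sub_mul1 sub_mul1r sub_mulV sub_mulVr.

End SubGroup.

Section QuotientGroup.
Variables (G : group) (M : G -> Prop).
Hypothesis nM : is_normal M.
Implicit Types (x y : G).

Definition lcoset x : G -> Prop := fun y => M (mul (inv x) y).
Definition quot_type := {C : G -> Prop | exists x, C = lcoset x}.
Definition quot_proj x : quot_type := exist _ (lcoset x) (ex_intro _ x erefl).

Lemma quot_proj_eq x y : quot_proj x = quot_proj y <-> M (mul (inv x) y).
Proof.
have sM := nM.1; split=> [E | Mxy].
  have : lcoset y y by rewrite /lcoset mulVg; exact: (subgroup1 sM).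
  by rewrite -[lcoset y]/(sval (quot_proj y)) -E.
apply/sig_eq/functional_extensionality => z /=; apply: propositional_extensionality.
split=> [Mxz | Myz]; first exact: (subgroup_lcoset sM Mxy Mxz).
exact: (subgroup_lcoset sM (subgroup_lcoset_sym sM Mxy) Myz).
Qed.

Definition quot_repr (C : quot_type) : G := epsilon (inhabits one) (fun x => quot_proj x = C).

Lemma quot_reprK C : quot_proj (quot_repr C) = C.
Proof.
apply: (epsilon_spec (inhabits one) (fun x => quot_proj x = C)).
by case: C => C [x E]; exists x; apply: sig_eq; rewrite /= E.
Qed.

Definition quot_mul (C D : quot_type) := quot_proj (mul (quot_repr C) (quot_repr D)).
Definition quot_one := quot_proj one.
Definition quot_inv (C : quot_type) := quot_proj (inv (quot_repr C)).

Lemma quot_projM x y : quot_mul (quot_proj x) (quot_proj y) = quot_proj (mul x y).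
Proof.
rewrite /quot_mul; set x' := quot_repr _; set y' := quot_repr _.
have /quot_proj_eq Mx : quot_proj x' = quot_proj x by exact: quot_reprK.
have /quot_proj_eq My : quot_proj y' = quot_proj y by exact: quot_reprK.
apply/quot_proj_eq.
have -> : mul (inv (mul x' y')) (mul x y)
        = mul (conjg (inv y') (mul (inv x') x)) (mul (inv y') y).
  by rewrite /conjg invK invM !mulA mulgK.
exact: (subgroupM nM.1 (normalJ nM _ Mx) My).
Qed.

Lemma quot_projV x : quot_inv (quot_proj x) = quot_proj (inv x).
Proof.
rewrite /quot_inv; set x' := quot_repr _.
have /quot_proj_eq Mx : quot_proj x' = quot_proj x by exact: quot_reprK.
apply/quot_proj_eq; rewrite invK.
have -> : mul x' (inv x) = conjg x' (inv (mul (inv x') x)).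
  by rewrite /conjg invM invK !mulA mulgK.
exact: (normalJ nM _ (subgroupV nM.1 Mx)).
Qed.

Lemma quot_mulA (C D E : quot_type) : quot_mul C (quot_mul D E) = quot_mul (quot_mul C D) E.
Proof. by rewrite -[C]quot_reprK -[D]quot_reprK -[E]quot_reprK !quot_projM mulA. Qed.
Lemma quot_mul1 C : quot_mul quot_one C = C.
Proof. by rewrite -[C]quot_reprK quot_projM mul1g. Qed.
Lemma quot_mul1r C : quot_mul C quot_one = C.
Proof. by rewrite -[C]quot_reprK quot_projM mulg1. Qed.
Lemma quot_mulV C : quot_mul (quot_inv C) C = quot_one.
Proof. by rewrite -[C]quot_reprK quot_projV quot_projM mulVg. Qed.
Lemma quot_mulVr C : quot_mul C (quot_inv C) = quot_one.
Proof. by rewrite -[C]quot_reprK quot_projV quot_projM mulgV. Qed.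

Definition quot_group : group := Group quot_mulA quot_mul1 quot_mul1r quot_mulV quot_mulVr.

Lemma quot_proj_hom : is_hom (quot_proj : G -> quot_group).
Proof. by move=> x y; rewrite -quot_projM. Qed.

Lemma quot_proj_eq1 x : (quot_proj x : quot_group) = one <-> M x.
Proof.
by rewrite quot_proj_eq mulg1; split=> /(subgroupV nM.1); rewrite ?invK.
Qed.

End QuotientGroup.

Lemma quotient_exists (G : group) (N K : G -> Prop) :
  is_subgroup N -> is_subgroup K -> (forall x k, N x -> K k -> K (conjg x k)) ->
  exists (Q : group) (pi : G -> Q), is_quotient_by N K pi.
Proof.
move=> sN sK NK.
pose K' (x : sub_group sN) := K (sval x).
have nK' : is_normal K'.
  have sval_hom : is_hom (fun x : sub_group sN => sval x) by [].
  split; first exact: (subgroup_preim sval_hom sK).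
  by case=> g Ng [x Nx] Kx; exact: NK.
pose pi x := if excluded_middle_informative (N x) is left Nx
             then quot_proj K' (exist N x Nx : sub_group sN) else quot_one K'.
have pi_in x (Nx : N x) : pi x = quot_proj K' (exist N x Nx).
  by rewrite /pi; case: excluded_middle_informative => // Nx'; rewrite (proof_irrelevance _ Nx' Nx).
exists (quot_group nK'), pi; split; [|split].
- move=> x y Nx Ny; rewrite (pi_in _ Nx) (pi_in _ Ny) (pi_in _ (subgroupM sN Nx Ny)).
  by rewrite -(quot_proj_hom nK'); congr quot_proj; apply: sig_eq.
- move=> q; rewrite -(quot_reprK q); case: (quot_repr q) => x Nx.
  by exists x; split=> //; rewrite (pi_in _ Nx).
- by move=> x Nx; rewrite (pi_in _ Nx) quot_proj_eq1.
Qed.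

Section QuotientMap.
Variables (G Q : group) (N K : G -> Prop) (pi : G -> Q).
Hypothesis sN : is_subgroup N.
Hypothesis piQ : is_quotient_by N K pi.

Lemma quotient_mapM x y : N x -> N y -> pi (mul x y) = mul (pi x) (pi y).
Proof. by case: piQ => piM _; exact: piM. Qed.

Lemma quotient_map1 : pi one = one.
Proof.
have N1 := subgroup1 sN.
by apply: (@mulgI _ (pi one)); rewrite -quotient_mapM // !mulg1.
Qed.

Lemma quotient_mapV x : N x -> pi (inv x) = inv (pi x).
Proof.
move=> Nx; symmetry; apply: inv_uniq.
by rewrite -quotient_mapM ?mulgV ?quotient_map1 //; exact: (subgroupV sN).
Qed.

Lemma quotient_map_onto q : exists x, N x /\ pi x = q.
Proof. by case: piQ => _ [onto _]; exact: onto. Qed.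

Lemma quotient_map_eq1 x : N x -> (pi x = one <-> K x).
Proof. by case: piQ => _ [_ ker]; exact: ker. Qed.

Definition quotient_image (L : G -> Prop) (q : Q) := exists y, [/\ N y, L y & pi y = q].

Lemma quotient_image_normal L : is_normal L -> is_normal (quotient_image L).
Proof.
move=> nL; have sL := nL.1.
split; [split; [|split] |].
- by exists one; rewrite quotient_map1; split; [exact: (subgroup1 sN) | exact: (subgroup1 sL)|].
- move=> _ _ [x [Nx Lx <-]] [y [Ny Ly <-]]; exists (mul x y).
  by rewrite quotient_mapM //; split; [exact: (subgroupM sN Nx Ny) | exact: (subgroupM sL Lx Ly)|].
- move=> _ [x [Nx Lx <-]]; exists (inv x).
  by rewrite quotient_mapV //; split; [exact: (subgroupV sN Nx) | exact: (subgroupV sL Lx)|].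
- move=> q _ [y [Ny Ly <-]]; have [x [Nx <-]] := quotient_map_onto q.
  have Nx' := subgroupV sN Nx.
  exists (conjg x y); rewrite /conjg !quotient_mapM ?quotient_mapV //;
    last exact: (subgroupM sN Nx Ny).
  by split=> //; [exact: (subgroupM sN (subgroupM sN Nx Ny) Nx') | exact: normalJ].
Qed.

Lemma quotient_image_finite_index L :
  is_subgroup L -> finite_index L -> finite_index (quotient_image L).
Proof.
move=> sL /(finite_index_classifier sL) [n [c hc]].
have /choice [pre hpre] := quotient_map_onto.
apply: (finite_index_fibres (c := c \o pre)) => q q' /hc L_qq'.
have [[Nq <-] [Nq' <-]] := (hpre q, hpre q').
exists (mul (inv (pre q)) (pre q')).
have Nq'' := subgroupV sN Nq.
by rewrite quotient_mapM ?quotient_mapV //; split=> //; exact: (subgroupM sN Nq'' Nq').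
Qed.

Lemma quotient_preimage (S : Q -> Prop) :
  finite_index N -> is_subgroup S -> finite_index S ->
  is_subgroup (fun x => N x /\ S (pi x)) /\ finite_index (fun x => N x /\ S (pi x)).
Proof.
move=> /finite_index_transversal [n [r [c hr]]] sS fS.
split.
  split; first by rewrite quotient_map1; split; [exact: (subgroup1 sN) | exact: (subgroup1 sS)].
  split=> [x y [Nx Sx] [Ny Sy] | x [Nx Sx]].
    by rewrite quotient_mapM //; split; [exact: (subgroupM sN Nx Ny) | exact: (subgroupM sS Sx Sy)].
  by rewrite quotient_mapV //; split; [exact: (subgroupV sN Nx) | exact: (subgroupV sS Sx)].
have [m [cS hcS]] := finite_index_classifier sS fS.
pose d x := mul (inv (r (c x))) x.
apply: (finite_index_fibres (c := fun x => (c x, cS (pi (d x))))) => x y [cxy /hcS S_dxy].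
have [Ndx Ndy] : N (d x) /\ N (d y) by split; exact: hr.
have -> : mul (inv x) y = mul (inv (d x)) (d y) by rewrite /d cxy invM invK -mulA mulKVg.
split; first exact: (subgroupM sN (subgroupV sN Ndx) Ndy).
by rewrite quotient_mapM ?quotient_mapV //; exact: (subgroupV sN Ndx).
Qed.

End QuotientMap.

Section ActionKernel.
Variables (G : group) (X : Type) (rho : G -> sym_group X) (E : X -> X -> Prop).
Hypothesis rho_hom : is_hom rho.
Hypothesis E_refl : forall p, E p p.
Hypothesis E_sym : forall p q, E p q -> E q p.
Hypothesis E_trans : forall p q r, E p q -> E q r -> E p r.
Hypothesis rho_E : forall g p q, E p q -> E (bij_fun (rho g) p) (bij_fun (rho g) q).

Definition act_kernel (g : G) := forall p, E (bij_fun (rho g) p) p.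

Lemma act_kernel_normal : is_normal act_kernel.
Proof.
split; [split; [|split] |].
- by move=> p; rewrite (hom1 rho_hom).
- by move=> x y kx ky p; rewrite rho_hom; exact: E_trans (rho_E x (ky p)) (kx p).
- move=> x kx p; rewrite (homV rho_hom) /=; apply: E_sym.
  by have := kx (bij_inv (rho x) p); rewrite bij_invK.
- move=> g x kx p; rewrite (homJ rho_hom) /=.
  by have := rho_E g (kx (bij_inv (rho g) p)); rewrite bij_invK.
Qed.

Lemma act_kernel_finite_index (T : finType) (r : T -> X) :
  (forall p, exists i, E p (r i)) -> finite_index act_kernel.
Proof.
move=> /choice [c hc].
apply: (finite_index_fibres (c := fun g => [ffun i => c (bij_fun (rho g) (r i))])).
move=> g g' /ffunP same_c p; set i := c p.
have Egg' : E (bij_fun (rho g) p) (bij_fun (rho g') p).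
  have := same_c i; rewrite !ffunE => ci.
  apply: E_trans (rho_E g (hc p)) _; apply: E_trans (hc _) _; rewrite ci.
  exact: E_trans (E_sym (hc _)) (rho_E g' (E_sym (hc p))).
rewrite rho_hom (homV rho_hom) /=; apply: E_sym.
by have := rho_E (inv g) Egg'; rewrite (homV rho_hom) /= bij_funK.
Qed.

End ActionKernel.

(** * HNN extensions *)

Section HNNExtension.
Variables (H : group) (K : H -> Prop) (phi psi : H -> H).
Variables (G : group) (iota : H -> G) (t : G).
Hypothesis hnn : is_HNN K phi iota t.

Lemma iota_hom : is_hom iota.
Proof. by case: hnn. Qed.

Lemma hnn_relation k : K k -> conjg t (iota k) = iota (phi k).
Proof. by case: hnn => _ [rel _]; exact: rel. Qed.

Lemma hnn_generated (P : G -> Prop) :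
  is_subgroup P -> (forall h, P (iota h)) -> P t -> forall g, P g.
Proof.
move=> sP P_iota P_t; case: hnn => iota_hom [rel univ].
pose f h : sub_group sP := exist P (iota h) (P_iota h).
pose s : sub_group sP := exist P t P_t.
have f_hom : is_hom f by move=> x y; apply: sig_eq; exact: iota_hom.
have f_rel k : K k -> conjg s (f k) = f (phi k) by move=> Kk; apply: sig_eq; exact: rel.
have [F [[F_hom [F_iota F_t]] _]] := univ _ f s f_hom f_rel.
have [F0 [_ F0_uniq]] := univ _ iota t iota_hom rel.
have sval_F : forall g, sval (F g) = F0 g.
  by apply: (F0_uniq (fun g => sval (F g))) => [x y | h |] /=; rewrite ?F_hom ?F_iota ?F_t.
by move=> g; have := proj2_sig (F g); rewrite sval_F -(F0_uniq id).
Qed.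

Hypothesis phi_hom : is_hom phi.
Hypothesis phiK : cancel phi psi.
Hypothesis psiK : cancel psi phi.

Let psi_hom : is_hom psi := can_hom phi_hom phiK psiK.

Definition tpow (e : bool) : G := if e then t else inv t.

Fixpoint word_val (w : seq (bool * H)) : G :=
  if w is (e, h) :: w' then mul (tpow e) (mul (iota h) (word_val w')) else one.

(* The subwords t h t^-1 with h in K and t^-1 h t with psi h in K collapse into H. *)
Definition pinch (e : bool) (h : H) (e' : bool) : Prop :=
  match e, e' with
  | true, false => K h
  | false, true => K (psi h)
  | _, _ => False
  end.

Fixpoint reduced (w : seq (bool * H)) : Prop :=
  match w with
  | (e, h) :: ((e', _) :: _) as w' => ~ pinch e h e' /\ reduced w'
  | _ => True
  end.

Lemma reduced_behead e h w : reduced ((e, h) :: w) -> reduced w.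
Proof. by case: w => [|[? ?] ?] //= []. Qed.

Lemma reduced_nth (u : seq (bool * H)) d : reduced u -> d.+1 < size u ->
  ~ pinch (nth (true, one) u d).1 (nth (true, one) u d).2 (nth (true, one) u d.+1).1.
Proof.
elim: u d => [|[e h] u IHu] d //=.
case: u IHu => [|[e' h'] u] IHu //= [not_pinch red_u] lt_d.
by case: d lt_d => [|d] lt_d //=; apply: IHu.
Qed.

Definition keeps_normal_forms (g : G) : Prop :=
  forall h w, reduced w ->
  exists h' w', reduced w' /\ mul g (mul (iota h) (word_val w)) = mul (iota h') (word_val w').

Lemma keeps_normal_forms_tpow e : keeps_normal_forms (tpow e).
Proof.
move=> h w red_w.
case: (classic (exists e' h1 w1, w = (e', h1) :: w1 /\ pinch e h e'))
  => [[e' [h1 [w1 [? pinched]]]] | no_pinch].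
  subst w; have red_w1 := reduced_behead red_w.
  case: e e' pinched red_w => [] [] //= Kh _.
  - exists (mul (phi h) h1), w1; split=> //.
    by rewrite iota_hom -(hnn_relation Kh) /conjg !mulA.
  - exists (mul (psi h) h1), w1; split=> //.
    have -> : iota h = conjg t (iota (psi h)) by rewrite hnn_relation // psiK.
    by rewrite iota_hom /conjg !mulA mulVg mul1g mulgKV.
exists one, ((e, h) :: w); rewrite /= (hom1 iota_hom) mul1g; split=> //.
case: w red_w no_pinch => [|[e' h1] w1] //= red_w no_pinch.
by split=> // pinched; apply: no_pinch; exists e', h1, w1.
Qed.

Lemma reduced_form g : exists h w, reduced w /\ g = mul (iota h) (word_val w).
Proof.
have kmul x y : keeps_normal_forms x -> keeps_normal_forms y -> keeps_normal_forms (mul x y).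
  move=> kx ky h w red_w; have [h1 [w1 [red_w1 E]]] := ky h w red_w.
  by rewrite -mulA E; exact: kx.
have kiota x : keeps_normal_forms (iota x).
  by move=> h w red_w; exists (mul x h), w; rewrite iota_hom mulA.
have [kg _] : keeps_normal_forms g /\ keeps_normal_forms (inv g).
  apply: (hnn_generated (P := fun g => keeps_normal_forms g /\ keeps_normal_forms (inv g))).
  - split; first by rewrite inv1 -(hom1 iota_hom); split; exact: kiota.
    split=> [x y [kx kx'] [ky ky'] | x [kx kx']]; last by rewrite invK.
    by split; [exact: kmul | rewrite invM; exact: kmul].
  - by move=> h; split; rewrite -?(homV iota_hom); exact: kiota.
  - by split; [exact: (keeps_normal_forms_tpow true) | exact: (keeps_normal_forms_tpow false)].
have [h [w [red_w E]]] := kg one [::] I.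
by exists h, w; rewrite -E /= (hom1 iota_hom) !mulg1.
Qed.

Section PermutationRepresentation.
Variables (A : Type) (sigma : H -> bij A).
Hypothesis sigma_Kcoset : forall k x, K k -> sigma (mul k x) = sigma x.

Definition lmul_bij (h : H) : bij (H * A).
Proof.
refine (@Bij _ (fun p => (mul h p.1, p.2)) (fun p => (mul (inv h) p.1, p.2)) _ _);
  by case=> x a; rewrite /= ?mulKg ?mulKVg.
Defined.

Definition twist_bij : bij (H * A).
Proof.
refine (@Bij _ (fun p => (phi p.1, bij_fun (sigma p.1) p.2))
               (fun p => (psi p.1, bij_inv (sigma (psi p.1)) p.2)) _ _);
  by case=> x a; rewrite /= ?phiK ?psiK ?bij_funK ?bij_invK.
Defined.

Lemma hnn_perm_rep : exists rho : G -> sym_group (H * A),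
  [/\ is_hom rho, forall h, rho (iota h) = lmul_bij h & rho t = twist_bij].
Proof.
case: hnn => _ [_ univ].
have lmul_hom : is_hom (lmul_bij : H -> sym_group (H * A)).
  by move=> x y; apply: bij_eq => -[z a] /=; rewrite mulA.
have rel k : K k -> conjg (twist_bij : sym_group (H * A)) (lmul_bij k) = lmul_bij (phi k).
  move=> Kk; apply: bij_eq => -[y a] /=.
  by rewrite phi_hom psiK sigma_Kcoset // bij_invK.
by have [rho [[? [? ?]] _]] := univ _ _ _ lmul_hom rel; exists rho.
Qed.

End PermutationRepresentation.

Lemma iota_inj : injective iota.
Proof.
move=> x y E.
have [rho [rho_hom rho_iota _]] := @hnn_perm_rep unit (fun _ => bij_one unit) (fun _ _ _ => erefl).
have := f_equal (fun g => bij_fun (rho g) (one, tt)) E.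
by rewrite /= !rho_iota /= !mulg1 => -[].
Qed.

Lemma hnn_conjg_outside n : is_subgroup K -> ~ K n -> conjg t (iota n) <> iota (phi n).
Proof.
move=> sK not_Kn E.
pose sigma x := if excluded_middle_informative (K x) then swap true false else bij_one bool.
have sigma_Kcoset k x : K k -> sigma (mul k x) = sigma x.
  move=> Kk; rewrite /sigma.
  case: excluded_middle_informative => Kkx; case: excluded_middle_informative => Kx //.
  - by case: Kx; rewrite -(mulKg k x); exact: (subgroupM sK (subgroupV sK Kk) Kkx).
  - by case: Kkx; exact: (subgroupM sK Kk Kx).
have [rho [rho_hom rho_iota rho_t]] := hnn_perm_rep sigma_Kcoset.
have := f_equal (fun g => bij_fun (rho g) (one, true)) E.
rewrite /conjg !rho_hom (homV rho_hom) !rho_iota rho_t /=.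
rewrite (hom1 psi_hom) !mulg1 /sigma.
case: (excluded_middle_informative (K one)) => [K1 | /(_ (subgroup1 sK)) //].
by case: (excluded_middle_informative (K n)) => // Kn [].
Qed.

End HNNExtension.

(** * Residual finiteness *)

Section ForwardDirection.
Variables (H : group) (K : H -> Prop) (phi psi : H -> H).
Variables (G : group) (iota : H -> G) (t : G).
Hypothesis hnn : is_HNN K phi iota t.
Hypothesis phi_hom : is_hom phi.
Hypothesis phiK : cancel phi psi.
Hypothesis psiK : cancel psi phi.
Hypothesis sK : is_subgroup K.
Hypothesis G_rf : residually_finite G.

Lemma hnn_base_residually_finite : residually_finite H.
Proof.
move=> h h_ne1; have iota_h : iota h <> one.
  by rewrite -(hom1 (iota_hom hnn)) => /(iota_inj hnn phi_hom phiK psiK).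
have [M [nM [fM not_Mh]]] := G_rf iota_h.
exists (fun x => M (iota x)); split; first exact: normal_preim (iota_hom hnn) nM.
by split=> //; exact: finite_index_preim (iota_hom hnn) nM.1 fM.
Qed.

Lemma hnn_quotient_residually_finite (N : H -> Prop) (Q : group) (pi : H -> Q) :
  is_subgroup N -> is_quotient_by N K pi -> residually_finite Q.
Proof.
move=> sN piQ q q_ne1.
have [n [Nn pin]] := quotient_map_onto piQ q; subst q.
have not_Kn : ~ K n by move/(quotient_map_eq1 piQ Nn).
pose w := mul (conjg t (iota n)) (inv (iota (phi n))).
have w_ne1 : w <> one.
  move=> w1; apply: (hnn_conjg_outside hnn phi_hom phiK psiK sK not_Kn).
  by rewrite -[LHS](mulgKV (iota (phi n))) -/w w1 mul1g.
have [M [nM [fM not_Mw]]] := G_rf w_ne1.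
have iota_hom := iota_hom hnn; have iota_phi_hom := hom_comp phi_hom iota_hom.
pose L x := M (iota x) /\ M (iota (phi x)).
have nL : is_normal L by apply: normal_inter; exact: normal_preim nM.
have fL : finite_index L.
  apply: finite_index_inter.
  - exact: (subgroup_preim iota_hom nM.1).
  - exact: (subgroup_preim iota_phi_hom nM.1).
  - exact: (finite_index_preim iota_hom nM.1 fM).
  - exact: (finite_index_preim iota_phi_hom nM.1 fM).
exists (quotient_image N pi L); split; first exact: (quotient_image_normal sN piQ nL).
split; first exact: (quotient_image_finite_index sN piQ nL.1 fL).
case=> y [Ny [My Mphiy] pi_y]; apply: not_Mw.
have Kk : K (mul (inv y) n).
  have Ny' := subgroupV sN Ny.
  apply/(quotient_map_eq1 piQ (subgroupM sN Ny' Nn)).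
  by rewrite (quotient_mapM piQ) ?(quotient_mapV sN piQ) ?pi_y ?mulVg.
rewrite /w -[n](mulKVg y) (iota_hom y) conjMg (hnn_relation hnn Kk).
rewrite (phi_hom y) (iota_hom (phi y)) invM mulA mulgK.
exact: (subgroupM nM.1 (normalJ nM t My) (subgroupV nM.1 Mphiy)).
Qed.

End ForwardDirection.

Section SeparatingSubgroup.
Variables (H : group) (K : H -> Prop).
Hypothesis sK : is_subgroup K.
Hypothesis fN : finite_index (normalizer K).
Hypothesis N_K_rf : quotient_residually_finite (normalizer K) K.

Lemma separate_from_subgroup h : ~ K h ->
  exists P, [/\ is_subgroup P, finite_index P, forall k, K k -> P k & ~ P h].
Proof.
move=> not_Kh; have sN := normalizer_subgroup K.
have K_N k : K k -> normalizer K k by exact: normalizer_self.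
case: (classic (normalizer K h)) => Nh; last by exists (normalizer K).
have [Q [pi piQ]] := quotient_exists sN sK (fun x k Nx Kk => proj1 (Nx k) Kk).
have /(N_K_rf piQ) [S [nS [fS not_S_pih]]] : pi h <> one.
  by move/(quotient_map_eq1 piQ Nh).
have [sP fP] := quotient_preimage sN piQ fN nS.1 fS.
exists (fun x => normalizer K x /\ S (pi x)); split=> // [k Kk | [_ //]].
split; first exact: K_N.
by rewrite (proj2 (quotient_map_eq1 piQ (K_N k Kk)) Kk); exact: (subgroup1 nS.1).
Qed.

Lemma separate_list_from_subgroup (xs : list H) :
  exists P, [/\ is_subgroup P, finite_index P, forall k, K k -> P k
              & forall x, List.In x xs -> ~ K x -> ~ P x].
Proof.
elim: xs => [|x xs [P [sP fP KP sepP]]].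
  by exists (fun _ => True); split=> //; exact: finite_indexT.
case: (classic (K x)) => [Kx | not_Kx].
  by exists P; split=> // y [<- | /sepP] //.
have [P' [sP' fP' KP' not_P'x]] := separate_from_subgroup not_Kx.
exists (fun y => P y /\ P' y); split.
- exact: subgroup_inter.
- exact: finite_index_inter.
- by move=> k Kk; split; [exact: KP | exact: KP'].
- move=> y [<- _ [_ /not_P'x []] | in_y not_Ky [Py _]].
  exact: sepP in_y not_Ky Py.
Qed.

End SeparatingSubgroup.

Section InvariantSubgroup.
Variables (H : group) (phi psi : H -> H).
Hypothesis phi_hom : is_hom phi.
Hypothesis phiK : cancel phi psi.
Hypothesis psiK : cancel psi phi.
Hypothesis H_fg : finitely_generated H.

Let psi_hom : is_hom psi := can_hom phi_hom phiK psiK.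

Lemma iterK n : cancel (iter n phi) (iter n psi).
Proof. by elim: n => [|n IHn] x //; rewrite iterSr iterS phiK IHn. Qed.

Lemma normal_subgroup_period L : is_normal L -> finite_index L ->
  exists2 p, 0 < p & forall y, L y <-> L (iter p psi y).
Proof.
move=> nL /(finite_index_classifier nL.1) [n [c hc]].
have [s gen_s] := H_fg.
pose T := {ffun 'I_(length s) -> 'I_n}.
pose code j : T := [ffun i : 'I_(length s) => c (iter j psi (List.nth i s one))].
have [a [b [lt_ab code_ab]]] : exists a b, a < b /\ code a = code b.
  apply: NNPP => no_repeat.
  have : injective (fun i : 'I_#|T|.+1 => code i).
    move=> i j code_ij; apply: val_inj.
    by case: (ltngtP i j) => // [lt_ij | lt_ji]; case: no_repeat; [exists i, j | exists j, i].
  by move/leq_card; rewrite card_ord ltnn.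
(* psi^a and psi^b agree modulo L on the generators, hence on all of H. *)
have L_ab h : L (mul (inv (iter a psi h)) (iter b psi h)).
  move: h; apply: (gen_s (fun h => L (mul (inv (iter a psi h)) (iter b psi h)))).
    exact: (subgroup_eq_mod (hom_iter _ psi_hom) (hom_iter _ psi_hom) nL).
  move=> x /(List.In_nth _ _ one) [i [lt_i <-]].
  have lt_i' : i < length s by apply/ltP.
  by apply: hc; have := congr1 (fun f : T => f (Ordinal lt_i')) code_ab; rewrite !ffunE.
exists (b - a); first by rewrite subn_gt0.
move=> y; have := L_ab (iter a phi y).
rewrite -{1}(subnK (ltnW lt_ab)) iterD iterK => L_y.
split=> [Ly | Lpy]; first by have := subgroupM nL.1 Ly L_y; rewrite mulKVg.
by have := subgroupM nL.1 Lpy (subgroupV nL.1 L_y); rewrite invM invK mulKVg.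
Qed.

Lemma invariant_normal_subgroup P : is_subgroup P -> finite_index P ->
  exists L, [/\ is_normal L, finite_index L, forall x, L x -> P x,
             forall x, L x -> L (phi x) & forall x, L x -> L (psi x)].
Proof.
move=> sP fP; have [M [nM fM MP]] := normal_core sP fP.
have [p p_gt0 Mp] := normal_subgroup_period nM fM.
have iter_hom q := hom_iter q psi_hom.
exists (fun y => forall q, q < p -> M (iter q psi y)); split.
- split; [split; [|split] |].
  + by move=> q _; rewrite (hom1 (iter_hom q)); exact: (subgroup1 nM.1).
  + by move=> x y Mx My q lt_q; rewrite iter_hom; exact: (subgroupM nM.1 (Mx q lt_q) (My q lt_q)).
  + by move=> x Mx q lt_q; rewrite (homV (iter_hom q)); exact: (subgroupV nM.1 (Mx q lt_q)).
  + by move=> g x Mx q lt_q; rewrite (homJ (iter_hom q)); exact: (normalJ nM _ (Mx q lt_q)).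
- have [n [c hc]] := finite_index_classifier nM.1 fM.
  apply: (finite_index_fibres (c := fun y => [ffun q : 'I_p => c (iter q psi y)])).
  move=> x y /ffunP c_xy q lt_q; have := c_xy (Ordinal lt_q); rewrite !ffunE => /hc.
  by rewrite iter_hom (homV (iter_hom q)).
- by move=> x /(_ 0 p_gt0) /MP.
- move=> x Mx [|q] lt_q; last by rewrite iterSr phiK; apply: Mx; lia.
  by apply/Mp; rewrite -(prednK p_gt0) iterSr phiK; apply: Mx; lia.
- move=> x Mx q lt_q; rewrite -iterSr.
  have [lt_q1 | ge_q1] := ltnP q.+1 p; first exact: Mx.
  have -> : q.+1 = p by lia.
  by rewrite -Mp; exact: (Mx 0 p_gt0).
Qed.

End InvariantSubgroup.

Section WordAction.
Variables (H : group) (K : H -> Prop) (phi psi : H -> H) (L : H -> Prop).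
Hypothesis sK : is_subgroup K.
Hypothesis nL : is_normal L.
Hypothesis fL : finite_index L.
Hypothesis phi_hom : is_hom phi.
Hypothesis phiK : cancel phi psi.
Hypothesis psiK : cancel psi phi.
Hypothesis L_phi : forall x, L x -> L (phi x).
Hypothesis L_psi : forall x, L x -> L (psi x).

Let psi_hom : is_hom psi := can_hom phi_hom phiK psiK.

Definition KL x := exists k m, [/\ K k, L m & x = mul k m].

Lemma KL_subgroup : is_subgroup KL.
Proof.
have sL := nL.1; split.
  by exists one, one; rewrite mulg1; split; [exact: (subgroup1 sK) | exact: (subgroup1 sL) |].
split=> [_ _ [k1 [m1 [Kk1 Lm1 ->]]] [k2 [m2 [Kk2 Lm2 ->]]] | _ [k [m [Kk Lm ->]]]].
  exists (mul k1 k2), (mul (conjg (inv k2) m1) m2); split.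
  - exact: (subgroupM sK Kk1 Kk2).
  - exact: (subgroupM sL (normalJ nL _ Lm1) Lm2).
  - by rewrite /conjg invK !mulA mulgK.
exists (inv k), (conjg k (inv m)); split.
- exact: (subgroupV sK Kk).
- exact: (normalJ nL _ (subgroupV sL Lm)).
- by rewrite /conjg invM !mulA mulVg mul1g.
Qed.

Lemma KL_of_L x y : L (mul (inv x) y) -> KL (mul x (inv y)).
Proof.
move=> Lxy; exists one, (mul x (inv y)); split; [exact: (subgroup1 sK) | | by rewrite mul1g].
have -> : mul x (inv y) = conjg y (inv (mul (inv x) y)).
  by rewrite /conjg invM invK !mulA mulgV mul1g.
exact: (normalJ nL _ (subgroupV nL.1 Lxy)).
Qed.

Variable w : seq (bool * H).
Hypothesis red_w : reduced K psi w.
Hypothesis KL_sep : forall p, List.In p w -> (KL p.2 -> K p.2) /\ (KL (psi p.2) -> K (psi p.2)).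

(* [word_point u] is the H-coordinate of (one, size w) moved by the word u;
   [turn_point d] is the point at which the letter t^e_d acts. *)
Fixpoint word_point (u : seq (bool * H)) : H :=
  if u is (e, h) :: u' then (if e then phi else psi) (mul h (word_point u')) else one.

Definition letter d := nth (true, one) w d.

Definition turn_point d : H :=
  let y := mul (letter d).2 (word_point (drop d.+1 w)) in if (letter d).1 then y else psi y.

Lemma turn_point_adjacent d : d.+1 < size w ->
  KL (mul (turn_point d) (inv (turn_point d.+1))) -> (letter d).1 = (letter d.+1).1.
Proof.
move=> lt_d.
have not_pinch : ~ pinch K psi (letter d).1 (letter d).2 (letter d.+1).1.
  exact: reduced_nth red_w lt_d.
have /KL_sep : List.In (letter d) w by apply: In_nth_seq; lia.
rewrite /turn_point (drop_nth (true, one) lt_d) -/(letter d.+1) /=.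
case: (letter d) not_pinch => e1 h1; case: (letter d.+1) => e2 h2 /=.
set z := mul h2 (word_point (drop d.+2 w)).
case: e1; case: e2 => //= not_pinch [sep1 sep2] KL_d.
- by case: not_pinch; apply: sep1; move: KL_d; rewrite mulgK.
- by case: not_pinch; apply: sep2; move: KL_d; rewrite psi_hom phiK mulgK.
Qed.

Notation A := 'I_(size w).+1.

(* [sigma x] must move the level across the letter at position d, downwards
   for t and upwards for t^-1, whenever the turn point of d lies in KLx. *)
Definition step_pair (e : bool) (d : nat) : nat * nat := if e then (d.+1, d) else (d, d.+1).

Definition step_rel (x : H) (a b : A) : Prop :=
  exists2 d, d < size w /\ KL (mul (turn_point d) (inv x))
           & (a : nat, b : nat) = step_pair (letter d).1 d.

Lemma step_rel_consistent x a b a' b' : step_rel x a b -> step_rel x a' b' ->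
  (a = a' :> nat <-> b = b' :> nat).
Proof.
move=> [d [lt_d KL_d] E] [d' [lt_d' KL_d'] E'].
have KL_dd' : KL (mul (turn_point d) (inv (turn_point d'))).
  have := subgroupM KL_subgroup KL_d (subgroupV KL_subgroup KL_d').
  by rewrite invM invK mulA mulgKV.
have KL_d'd : KL (mul (turn_point d') (inv (turn_point d))).
  by have := subgroupV KL_subgroup KL_dd'; rewrite invM invK.
have adj_dd' : d' = d.+1 -> (letter d).1 = (letter d').1.
  by move=> eq_d'; move: lt_d' KL_dd'; rewrite eq_d'; exact: turn_point_adjacent.
have adj_d'd : d = d'.+1 -> (letter d').1 = (letter d).1.
  by move=> eq_d; move: lt_d KL_d'd; rewrite eq_d; exact: turn_point_adjacent.
move: E E' adj_dd' adj_d'd; rewrite /step_pair.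
case: (letter d).1; case: (letter d').1 => -[-> ->] [-> ->] adj_dd' adj_d'd;
  split=> eq_ab; try lia.
all: by [move: (adj_dd' ltac:(lia)) | move: (adj_d'd ltac:(lia))].
Qed.

Definition sigma (x : H) : bij A :=
  epsilon (inhabits (bij_one A)) (fun p => forall a b, step_rel x a b -> bij_fun p a = b).

Lemma sigma_step x a b : step_rel x a b -> bij_fun (sigma x) a = b.
Proof.
apply: (epsilon_spec (inhabits (bij_one A))
  (fun p => forall a b, step_rel x a b -> bij_fun p a = b)).
apply: (bij_extend (s := enum A)) => [a' b1 b2 R1 R2 | a1 a2 b' R1 R2 | a' b' _].
- by apply: val_inj; apply/(step_rel_consistent R1 R2).
- by apply: val_inj; apply/(step_rel_consistent R1 R2).
- by rewrite mem_enum.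
Qed.

Lemma sigma_KL x y : KL (mul x (inv y)) -> sigma x = sigma y.
Proof.
move=> KLxy; rewrite /sigma; congr epsilon.
apply: functional_extensionality => p; apply: propositional_extensionality.
suff step_xy : step_rel x = step_rel y by rewrite step_xy.
apply: functional_extensionality => a; apply: functional_extensionality => b.
apply: propositional_extensionality; split=> -[d [lt_d KL_d] E]; exists d => //; split=> //.
  by have := subgroupM KL_subgroup KL_d KLxy; rewrite -mulA mulKg.
have := subgroupM KL_subgroup KL_d (subgroupV KL_subgroup KLxy).
by rewrite invM invK -mulA mulKg.
Qed.

Lemma sigma_Kcoset k x : K k -> sigma (mul k x) = sigma x.
Proof.
move=> Kk; apply: sigma_KL; rewrite mulgK.
by exists k, one; split=> //; [exact: (subgroup1 nL.1) | rewrite mulg1].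
Qed.

Definition coset_rel (p q : H * A) := L (mul (inv p.1) q.1) /\ p.2 = q.2.

Variables (G : group) (iota : H -> G) (t : G) (rho : G -> sym_group (H * A)).
Hypothesis hnn : is_HNN K phi iota t.
Hypothesis rho_hom : is_hom rho.
Hypothesis rho_iota : forall h, rho (iota h) = lmul_bij A h.
Hypothesis rho_t : rho t = twist_bij phiK psiK sigma.

Lemma rho_coset_rel g p q : coset_rel p q -> coset_rel (bij_fun (rho g) p) (bij_fun (rho g) q).
Proof.
pose P g := forall p q, coset_rel p q <-> coset_rel (bij_fun (rho g) p) (bij_fun (rho g) q).
suff : P g by move=> /(_ p q) [].
apply: (hnn_generated hnn).
- split; first by move=> u v; rewrite (hom1 rho_hom).
  split=> [g1 g2 P1 P2 u v | g1 P1 u v].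
    rewrite rho_hom; split=> [/(proj1 (P2 u v)) /(proj1 (P1 _ _)) // | uv].
    exact/(proj2 (P2 u v))/(proj2 (P1 _ _)).
  have := P1 (bij_inv (rho g1) u) (bij_inv (rho g1) v).
  by rewrite (homV rho_hom) !bij_invK => -[? ?]; split.
- by move=> h [x a] [y b]; rewrite rho_iota /coset_rel /= invM -mulA mulKg.
- move=> [x a] [y b]; rewrite rho_t /coset_rel /= -(homV phi_hom) -phi_hom.
  split=> [[Lxy <-] | [Lxy]]; first by rewrite (sigma_KL (KL_of_L Lxy)); split; [exact: L_phi|].
  have {}Lxy : L (mul (inv x) y) by rewrite -[mul _ _]phiK; exact: L_psi.
  rewrite (sigma_KL (KL_of_L Lxy)) => /(congr1 (bij_inv (sigma y))).
  by rewrite !bij_funK.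
Qed.

Lemma sigma_turn_point d : d < size w ->
  bij_fun (sigma (turn_point d)) (inord (step_pair (letter d).1 d).1)
  = inord (step_pair (letter d).1 d).2.
Proof.
move=> lt_d; apply: sigma_step; exists d.
  by split=> //; rewrite mulgV; exact: (subgroup1 KL_subgroup).
by case: (letter d).1; rewrite /= !inordK //; lia.
Qed.

Lemma rho_suffix d : d <= size w ->
  bij_fun (rho (word_val iota t (drop d w))) (one, ord_max) = (word_point (drop d w), inord d).
Proof.
move=> le_d; move Ek: (size w - d) => k; elim: k d le_d Ek => [|k IHk] d le_d Ek.
  have -> : d = size w by lia.
  rewrite drop_size /= (hom1 rho_hom); congr pair; apply: val_inj; rewrite /= inordK //.
have lt_d : d < size w by lia.
have := sigma_turn_point lt_d; rewrite /turn_point.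
rewrite (drop_nth (true, one) lt_d) -/(letter d); case: (letter d) => e h /=.
rewrite !rho_hom /= IHk; [|lia|lia]; rewrite rho_iota /=.
by case: e => sig; rewrite ?(homV rho_hom) rho_t /= ?sig // -sig bij_funK.
Qed.

Lemma word_separated h0 : (w = [::] -> ~ L h0) ->
  exists M, [/\ is_normal M, finite_index M & ~ M (mul (iota h0) (word_val iota t w))].
Proof.
move=> L_h0; have sL := nL.1.
have refl p : coset_rel p p.
  by split=> //; rewrite mulVg; exact: (subgroup1 sL).
have sym p q : coset_rel p q -> coset_rel q p.
  by case=> Lpq pq; split; [exact: (subgroup_lcoset_sym sL Lpq) | ].
have trans p q r : coset_rel p q -> coset_rel q r -> coset_rel p r.
  move=> [Lpq pq] [Lqr qr]; split; last by rewrite pq.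
  exact: (subgroup_lcoset sL (subgroup_lcoset_sym sL Lpq) Lqr).
exists (act_kernel rho coset_rel); split.
- exact: (act_kernel_normal rho_hom refl sym trans rho_coset_rel).
- have [n [r [c hr]]] := finite_index_transversal fL.
  apply: (act_kernel_finite_index rho_hom sym trans rho_coset_rel (r := fun i => (r i.1, i.2))).
  by move=> [x a]; exists (c x, a); split=> //; exact: (subgroup_lcoset_sym sL (hr x)).
- move=> in_kernel; have [L_w /(congr1 val)] := in_kernel (one, ord_max).
  have := rho_suffix (leq0n (size w)); rewrite drop0 => rho_w.
  rewrite rho_hom /= rho_w rho_iota /= inordK // => /esym w_nil.
  have {}w_nil : w = [::] by apply/size0nil.
  apply: (L_h0 w_nil); move: L_w; rewrite rho_hom /= rho_w rho_iota /= w_nil /= !mulg1.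
  by move/(subgroupV sL); rewrite invK.
Qed.

End WordAction.

Section BackwardDirection.
Variables (H : group) (K : H -> Prop) (phi psi : H -> H).
Variables (G : group) (iota : H -> G) (t : G).
Hypothesis hnn : is_HNN K phi iota t.
Hypothesis phi_hom : is_hom phi.
Hypothesis phiK : cancel phi psi.
Hypothesis psiK : cancel psi phi.
Hypothesis sK : is_subgroup K.
Hypothesis H_fg : finitely_generated H.
Hypothesis fN : finite_index (normalizer K).
Hypothesis H_rf : residually_finite H.
Hypothesis N_K_rf : quotient_residually_finite (normalizer K) K.

Lemma hnn_residually_finite : residually_finite G.
Proof.
move=> g g_ne1.
have [h0 [w [red_w g_eq]]] := reduced_form hnn psiK g.
pose xs := List.flat_map (fun p : bool * H => [:: p.2; psi p.2]) w.
have [P1 [sP1 fP1 KP1 sepP1]] := separate_list_from_subgroup sK fN N_K_rf xs.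
have [P0 [nP0 fP0 P0_h0]] :
    exists P0, [/\ is_normal P0, finite_index P0 & h0 <> one -> ~ P0 h0].
  case: (classic (h0 = one)) => [h0_1 | /H_rf [P0 [nP0 [fP0 not_P0h0]]]].
    by exists (fun _ => True); split=> //; exact: finite_indexT.
  by exists P0.
have [L [nL fL LP L_phi L_psi]] := invariant_normal_subgroup phi_hom phiK psiK H_fg
  (subgroup_inter sP1 nP0.1) (finite_index_inter sP1 nP0.1 fP1 fP0).
have KL_sep p : List.In p w -> (KL K L p.2 -> K p.2) /\ (KL K L (psi p.2) -> K (psi p.2)).
  have KL_P1 x : KL K L x -> P1 x.
    by case=> k [m [Kk Lm ->]]; exact: (subgroupM sP1 (KP1 k Kk) (LP m Lm).1).
  move=> in_p; split=> /KL_P1 P1x; apply: NNPP => not_K; apply: (sepP1 _ _ not_K P1x);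
    apply/List.in_flat_map; exists p; split=> //; [left | right; left] => //.
have L_h0 : w = [::] -> ~ L h0.
  move=> w_nil /LP [_]; apply: P0_h0 => h0_1; apply: g_ne1.
  by rewrite g_eq w_nil h0_1 /= (hom1 (iota_hom hnn)) mulg1.
have [rho [rho_hom rho_iota rho_t]] :=
  hnn_perm_rep hnn phi_hom phiK psiK (sigma_Kcoset phi psi sK nL w).
have [M [nM fM not_Mg]] :=
  word_separated sK nL fL phi_hom L_phi L_psi red_w KL_sep hnn rho_hom rho_iota rho_t L_h0.
by exists M; rewrite g_eq.
Qed.

End BackwardDirection.

Theorem corollary1p2 (H : group) (phi : H -> H) (K : H -> Prop) :
  finitely_generated H ->
  is_automorphism phi ->
  is_subgroup K ->
  (exists h : H, ~ K h) ->
  finite_index (normalizer K) ->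
  forall (G : group) (iota : H -> G) (t : G),
    is_HNN K phi iota t ->
    (residually_finite G <->
     residually_finite H /\ quotient_residually_finite (normalizer K) K).
Proof.
move=> H_fg [phi_hom [psi [phiK psiK]]] sK _ fN G iota t hnn; split.
- move=> G_rf; split; first exact: (hnn_base_residually_finite hnn phi_hom phiK psiK G_rf).
  move=> Q pi piQ.
  exact: (hnn_quotient_residually_finite hnn phi_hom phiK psiK sK G_rf (normalizer_subgroup K) piQ).
- case=> H_rf N_K_rf.
  exact: (hnn_residually_finite hnn phi_hom phiK psiK sK H_fg fN H_rf N_K_rf).
Qed.
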